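(* Let $\Omega=\{A\in\mathbb{R}^{m\times m}:A=A^{\top}\}$ be the set of real symmetric matrices, let $\mathcal{P}=\{P\in\mathbb{R}^{m\times m}:P^\top=P^{-1}\}$ be the set of orthogonal matrices, let $s(A,B,P)=\|AP-PB\|$ for all $A,B\in\Omega$, $P\in\mathcal{P}$, where $\|\cdot\|$ is an orthogonally invariant matrix norm, and let $d(A,B)=\min_{P\in\mathcal{P}} s(A,B,P)$. Then the Fermat distance function $d_F$ induced by $d$, and the $\mathcal{G}$-align distance function $d_\mathcal{G}$ induced by $s$, are pseudo $n$-metrics.
   Context: For $A_1,\dots,A_n\in\Omega$, write $A_{1:n}=(A_1,\dots,A_n)$, and let $A^i_{1:n,n+1}$ denote the sequence $A_{1:n}$ with $A_i$ replaced by $A_{n+1}$. A map $d:\Omega^n\to\mathbb{R}$ is a pseudo $n$-metric if for all $A_1,\dots,A_{n+1}\in\Omega$: $d(A_{1:n})\ge 0$; $d(A,\dots,A)=0$; $d(A_{1:n})=d(A_{\sigma(1:n)})$ for every permutation $\sigma$ of the indices; and $d(A_{1:n})\le\sum_{i=1}^n d(A^i_{1:n,n+1})$. The Fermat distance function induced by $d:\Omega^2\to\mathbb{R}$ is $d_F(A_{1:n})=\min_{B\in\Omega}\sum_{i=1}^n d(A_i,B)$. The $\mathcal{G}$-align distance function induced by $s:\Omega^2\times\mathcal{P}\to\mathbb{R}$ is $d_\mathcal{G}(A_{1:n})=\min_{P\in S}\frac12\sum_{i,j\in[n]} s(A_i,A_j,P_{i,j})$, where $S=\{\{P_{i,j}\}_{i,j\in[n]}: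 P_{i,j}\in\mathcal{P}\ \forall i,j;\ P_{i,k}P_{k,j}=P_{i,j}\ \forall i,j,k;\ P_{i,i}=I\ \forall i\}$. A matrix norm is orthogonally invariant if $\|PM\|=\|MP\|=\|M\|$ for every orthogonal $P$. *)

From mathcomp Require Import all_boot all_order all_algebra perm.
From mathcomp Require Import all_classical all_reals.
Set Implicit Arguments. Unset Strict Implicit. Unset Printing Implicit Defensive.
Import Order.TTheory GRing.Theory Num.Theory.
Local Open Scope ring_scope.
Local Open Scope classical_set_scope.

Section Defs.
Variables (R : realType) (m : nat).
Notation M := 'M[R]_m.

Definition symmetric (A : M) : Prop := A^T = A.

Definition orthogonal (P : M) : Prop := P \in unitmx /\ P^T = invmx P.

Definition matrix_norm (N : M -> R) : Prop :=
  [/\ forall A, 0 <= N A,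
      forall A, N A = 0 -> A = 0,
      forall (c : R) A, N (c *: A) = `|c| * N A &
      forall A B, N (A + B) <= N A + N B].

Definition orth_invariant (N : M -> R) : Prop :=
  forall P A, orthogonal P -> N (P *m A) = N A /\ N (A *m P) = N A.

Definition s_fun (N : M -> R) (A B P : M) : R := N (A *m P - P *m B).

(* d(A,B) = min_{P in calP} s(A,B,P)  (rendered as an infimum) *)
Definition d_fun (N : M -> R) (A B : M) : R :=
  inf [set s_fun N A B P | P in orthogonal].

Definition fermat_dist (d : M -> M -> R) (n : nat) (A : 'I_n -> M) : R :=
  inf [set (\sum_(i < n) d (A i) B) | B in symmetric].

Definition align_family (n : nat) (P : 'I_n -> 'I_n -> M) : Prop :=
  [/\ forall i j, orthogonal (P i j),
      forall i j k, P i k *m P k j = P i j &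
      forall i, P i i = 1%:M].

Definition galign_dist (s : M -> M -> M -> R) (n : nat) (A : 'I_n -> M) : R :=
  inf [set (2^-1 * \sum_(i < n) \sum_(j < n) s (A i) (A j) (P i j))
      | P in @align_family n].

Definition pseudo_n_metric (n : nat) (d : ('I_n -> M) -> R) : Prop :=
  [/\ forall A : 'I_n -> M, (forall i, symmetric (A i)) -> 0 <= d A,
      forall A0 : M, symmetric A0 -> d (fun _ => A0) = 0,
      forall (A : 'I_n -> M) (sigma : {perm 'I_n}), (forall i, symmetric (A i)) ->
        d A = d (fun i => A (sigma i)) &
      forall (A : 'I_n -> M) (Anew : M), (forall i, symmetric (A i)) ->
        symmetric Anew ->
        d A <= \sum_(i < n) d (fun j => if j == i then Anew else A j)].
End Defs.

From Pilot Require Import Defs.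
From mathcomp Require Import all_boot all_order all_algebra perm.
From mathcomp Require Import all_classical all_reals.
From mathcomp Require Import lra.
Set Implicit Arguments. Unset Strict Implicit. Unset Printing Implicit Defensive.
Import Order.TTheory GRing.Theory Num.Theory.
Local Open Scope ring_scope.
Local Open Scope classical_set_scope.

(* Only four properties of s(A, B, P) = ||AP - PB|| are used: it is nonnegative,
   s(A, A, I) = 0, s(B, A, P^T) = s(A, B, P), and
   s(A, C, PQ) <= s(A, B, P) + s(B, C, Q).  They make d(A, B) = inf_P s(A, B, P)
   a pseudometric, and d_F inherits the n-metric inequality from any two of its
   terms: d_F(A) <= d_F(A^i) + d_F(A^j) for i <> j.  For d_G, conjugating an
   admissible family {P_kl} for A^i by Q at index i yields one for A, whence
   d_G(A) <= d_G(A^i) + (n-1) s(A_i, A_{n+1}, Q); and every d_G(A^k) with k <> i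
   contains the pair (A_i, A_{n+1}), hence is at least d(A_i, A_{n+1}). *)

(* [all_algebra] and [ssrbool] export other [orthogonal] and [symmetric]. *)
Local Notation orthogonal := (@Defs.orthogonal _ _).
Local Notation symmetric := (@Defs.symmetric _ _).

Section Orthogonal.
Variables (R : realType) (m : nat).
Implicit Types P Q : 'M[R]_m.

Lemma orthogonal1 : orthogonal (1%:M : 'M[R]_m).
Proof. by split; rewrite ?unitmx1 // trmx1 invmx1. Qed.

Lemma orthogonal_mulTmx P : orthogonal P -> P^T *m P = 1%:M.
Proof. by move=> [uP ->]; rewrite mulVmx. Qed.

Lemma orthogonal_mulmxT P : orthogonal P -> P *m P^T = 1%:M.
Proof. by move=> [uP ->]; rewrite mulmxV. Qed.

Lemma orthogonal_mulmx P Q : orthogonal P -> orthogonal Q -> orthogonal (P *m Q).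
Proof.
move=> oP oQ; have uPQ : P *m Q \in unitmx by rewrite unitmx_mul oP.1 oQ.1.
split=> //; rewrite -[LHS](mulKmx uPQ) trmx_mul -!mulmxA (mulmxA Q).
by rewrite orthogonal_mulmxT // mul1mx orthogonal_mulmxT // mulmx1.
Qed.

Lemma orthogonal_trmx P : orthogonal P -> orthogonal P^T.
Proof. by move=> [uP tP]; split; rewrite ?unitmx_tr // trmxK -trmx_inv -tP trmxK. Qed.

End Orthogonal.

Section ImageInf.
Variables (R : realType) (T : Type).
Implicit Types (S : set T) (f : T -> R) (c : R).

Lemma inf_image_le S f x :
  (forall y, S y -> 0 <= f y) -> S x -> inf [set f y | y in S] <= f x.
Proof.
move=> f_ge0 Sx; apply: ge_inf; last by exists x.
by exists 0 => _ [y Sy <-]; exact: f_ge0.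
Qed.

Lemma le_inf_image S f x c :
  S x -> (forall y, S y -> c <= f y) -> c <= inf [set f y | y in S].
Proof.
move=> Sx lb; apply: lb_le_inf; first by exists (f x), x.
by move=> _ [y Sy <-]; exact: lb.
Qed.

Lemma le_inf_image_mulrn S f x c k :
  S x -> (forall y, S y -> c <= f y *+ k) -> c <= inf [set f y | y in S] *+ k.
Proof.
case: k => [|k] Sx lb; first by rewrite mulr0n; have := lb x Sx; rewrite mulr0n.
rewrite -mulr_natr -ler_pdivrMr //; apply: (le_inf_image (c := c / k.+1%:R) Sx) => y Sy.
by rewrite ler_pdivrMr // mulr_natr lb.
Qed.

End ImageInf.

Section Sums.
Variables (V : zmodType) (I : finType).

Lemma sumr_neq_const (i : I) (c : V) : \sum_(j | j != i) c = c *+ #|I|.-1.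
Proof. by rewrite sumr_const cardC1. Qed.

Lemma sum_offdiag_add (x : I -> V) :
  \sum_i \sum_(j | j != i) (x i + x j) = (\sum_i x i) *+ #|I|.-1 *+ 2.
Proof.
rewrite mulr2n; under eq_bigr do rewrite big_split /= sumr_neq_const.
rewrite big_split /= -sumrMnl; congr (_ + _).
rewrite (exchange_big_dep xpredT) //=; apply: eq_bigr => j _.
by under eq_bigl do rewrite eq_sym; rewrite sumr_neq_const.
Qed.

End Sums.

Section NonnegSums.
Variables (R : numDomainType) (I : finType) (x : I -> R).
Hypothesis x_ge0 : forall i, 0 <= x i.

Lemma ler_sum_neq i : \sum_(j | j != i) x j <= \sum_j x j.
Proof. by rewrite [leRHS](bigD1 i) //= lerDr. Qed.

Lemma ler_sum_term i : x i <= \sum_j x j.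
Proof. by rewrite (bigD1 i) //= lerDl sumr_ge0. Qed.

Lemma ler_add_sum2 i j : i != j -> x i + x j <= \sum_k x k.
Proof.
move=> ij; rewrite (bigD1 i) //= (bigD1 j) /=; last by rewrite eq_sym.
by rewrite addrA lerDl sumr_ge0.
Qed.

End NonnegSums.

Section FermatDistance.
Variables (R : realType) (m : nat).
Notation M := 'M[R]_m.

Definition pseudometric (d : M -> M -> R) : Prop :=
  [/\ forall A B, 0 <= d A B, forall A, d A A = 0,
      forall A B, d A B = d B A & forall A B C, d A C <= d A B + d B C].

Lemma symmetric0 : symmetric (0 : M).
Proof. by rewrite /symmetric trmx0. Qed.

Variable d : M -> M -> R.
Hypothesis d_pseudometric : pseudometric d.

Let d_ge0 A B : 0 <= d A B. Proof. by case: d_pseudometric. Qed.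
Let dxx A : d A A = 0. Proof. by case: d_pseudometric. Qed.
Let dC A B : d A B = d B A. Proof. by case: d_pseudometric. Qed.
Let d_triangle A B C : d A C <= d A B + d B C. Proof. by case: d_pseudometric. Qed.

Notation F := (fermat_dist d).

Lemma fermat_le n (A : 'I_n -> M) B : symmetric B -> F A <= \sum_i d (A i) B.
Proof. by move=> sB; apply: inf_image_le => // *; exact: sumr_ge0. Qed.

Lemma le_fermat n (A : 'I_n -> M) c :
  (forall B, symmetric B -> c <= \sum_i d (A i) B) -> c <= F A.
Proof. exact: le_inf_image symmetric0. Qed.

Lemma fermat_ge0 n (A : 'I_n -> M) : 0 <= F A.
Proof. by apply: le_fermat => *; exact: sumr_ge0. Qed.

Lemma fermat_const n A0 : symmetric A0 -> F (fun _ : 'I_n => A0) = 0.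
Proof.
move=> sA0; apply/le_anti; rewrite fermat_ge0 andbT.
by rewrite (le_trans (fermat_le _ sA0)) // big1.
Qed.

Lemma fermat_perm n (A : 'I_n -> M) (s : {perm 'I_n}) : F A = F (fun i => A (s i)).
Proof.
congr inf; apply: eq_imagel => B _.
exact: (reindex_inj (@perm_inj _ s)).
Qed.

Lemma sum_dist_le_replace2 n (A : 'I_n -> M) Z B1 B2 i j : i != j ->
  \sum_k d (A k) B1 <=
  \sum_k d (if k == i then Z else A k) B1 + \sum_k d (if k == j then Z else A k) B2.
Proof.
move=> ij; rewrite (bigD1 i) //= [X in _ <= X + _](bigD1 i) //= eqxx.
rewrite [X in _ <= _ + X + _](eq_bigr (fun k => d (A k) B1)); last first.
  by move=> k /negPf ->.
have := ler_add_sum2 (fun k => d_ge0 (if k == j then Z else A k) B2) ij.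
rewrite eqxx (negPf ij) => pair_le_sum.
(* d(A_i, B1) <= d(Z, B1) + d(A_i, B2) + d(Z, B2) *)
have := d_triangle (A i) Z B1; have := d_triangle (A i) B2 Z; rewrite (dC B2 Z).
lra.
Qed.

Lemma fermat_le_replace2 n (A : 'I_n -> M) Z i j : i != j ->
  F A <= F (fun k => if k == i then Z else A k) + F (fun k => if k == j then Z else A k).
Proof.
move=> ij; rewrite -lerBlDl; apply: le_fermat => B2 sB2.
rewrite lerBlDl -lerBlDr; apply: le_fermat => B1 sB1; rewrite lerBlDr.
exact: le_trans (fermat_le A sB1) (sum_dist_le_replace2 A Z B1 B2 ij).
Qed.

Lemma fermat_le_sum_replace n (A : 'I_n -> M) Z : (forall i, symmetric (A i)) ->
  F A <= \sum_i F (fun k => if k == i then Z else A k).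
Proof.
case: n A => [|[|n]] A sA.
- by rewrite big_ord0 (le_trans (fermat_le _ symmetric0)) // big_ord0.
- apply: (le_trans (fermat_le _ (sA ord0))); rewrite big_ord1 dxx.
  by apply: sumr_ge0 => *; exact: fermat_ge0.
- apply: (le_trans (fermat_le_replace2 A Z (isT : ord0 != ord_max :> 'I_n.+2))).
  exact: (ler_add_sum2 (x := fun i => F (fun k => if k == i then Z else A k))
                       (fun _ => fermat_ge0 _)).
Qed.

Lemma fermat_pseudo_n_metric n : pseudo_n_metric (fermat_dist d (n:=n)).
Proof.
split=> [A _|A0|A s _|A Z sA _].
- exact: fermat_ge0.
- exact: fermat_const.
- exact: fermat_perm.
- exact: fermat_le_sum_replace.
Qed.

End FermatDistance.

Section AlignFamily.
Variables (R : realType) (m n : nat).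
Notation M := 'M[R]_m.
Implicit Types (P : 'I_n -> 'I_n -> M) (T : 'I_n -> M).

Lemma align_family1 : align_family (fun _ _ : 'I_n => 1%:M : M).
Proof. by split=> *; rewrite ?mul1mx //; exact: orthogonal1. Qed.

Lemma align_family_trmx P i j : align_family P -> P j i = (P i j)^T.
Proof.
move=> [oP PM P1]; have [uPij ->] := oP i j.
by rewrite -[P j i](mulmxK uPij) PM P1 mul1mx.
Qed.

Lemma align_family_perm P (s : {perm 'I_n}) :
  align_family P -> align_family (fun i j => P (s i) (s j)).
Proof. by move=> [oP PM P1]; split. Qed.

Lemma align_family_conj P T : align_family P -> (forall i, orthogonal (T i)) ->
  align_family (fun i j => T i *m P i j *m (T j)^T).
Proof.
move=> [oP PM P1] oT; split=> [i j|i j k|i].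
- by apply/orthogonal_mulmx/orthogonal_trmx/oT; exact/orthogonal_mulmx.
- rewrite !mulmxA -(mulmxA _ (T k)^T) orthogonal_mulTmx // mulmx1.
  by rewrite -(mulmxA (T i)) PM.
- by rewrite P1 mulmx1 orthogonal_mulmxT.
Qed.

End AlignFamily.

Section InvariantCost.
Variables (R : realType) (m : nat).
Notation M := 'M[R]_m.

Definition invariant_cost (s : M -> M -> M -> R) : Prop :=
  [/\ forall A B P, 0 <= s A B P,
      forall A, s A A 1%:M = 0,
      forall A B P, orthogonal P -> s B A P^T = s A B P &
      forall A B C P Q, orthogonal P -> orthogonal Q ->
        s A C (P *m Q) <= s A B P + s B C Q].

Variable s : M -> M -> M -> R.
Hypothesis s_invariant : invariant_cost s.

Let s_ge0 A B P : 0 <= s A B P. Proof. by case: s_invariant. Qed.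
Let s_id A : s A A 1%:M = 0. Proof. by case: s_invariant. Qed.
Let s_trmx A B P : orthogonal P -> s B A P^T = s A B P.
Proof. by case: s_invariant => _ _ + _; apply. Qed.
Let s_mulmx A B C P Q : orthogonal P -> orthogonal Q ->
  s A C (P *m Q) <= s A B P + s B C Q.
Proof. by case: s_invariant => _ _ _; apply. Qed.

Definition induced_dist (A B : M) : R := inf [set s A B P | P in orthogonal].

Lemma induced_dist_le A B P : orthogonal P -> induced_dist A B <= s A B P.
Proof. exact: inf_image_le. Qed.

Lemma le_induced_dist A B c :
  (forall P, orthogonal P -> c <= s A B P) -> c <= induced_dist A B.
Proof. exact: le_inf_image (orthogonal1 R m). Qed.

Lemma induced_dist_pseudometric : pseudometric induced_dist.
Proof.
have d_ge0 A B : 0 <= induced_dist A B by exact: le_induced_dist.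
have dC_le A B : induced_dist B A <= induced_dist A B.
  apply: le_induced_dist => P oP; rewrite -s_trmx //.
  by apply: induced_dist_le; exact: orthogonal_trmx.
split=> [//|A|A B|A B C]; last 2 first.
- by apply/le_anti; rewrite !dC_le.
- rewrite -lerBlDl; apply: le_induced_dist => Q oQ; rewrite lerBlDl -lerBlDr.
  apply: le_induced_dist => P oP; rewrite lerBlDr.
  apply: (le_trans (induced_dist_le A C (orthogonal_mulmx oP oQ))); exact: s_mulmx.
apply/le_anti; rewrite d_ge0 andbT -(s_id A).
exact/induced_dist_le/orthogonal1.
Qed.

Lemma cost_conj A A' B B' P T U :
  orthogonal P -> orthogonal T -> orthogonal U ->
  s A B (T *m P *m U^T) <= s A A' T + s A' B' P + s B B' U.
Proof.
move=> oP oT oU; rewrite -(s_trmx _ _ oU) -mulmxA -addrA.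
have oPU : orthogonal (P *m U^T) by exact/orthogonal_mulmx/orthogonal_trmx.
apply: (le_trans (s_mulmx _ A' _ oT oPU)).
by rewrite lerD2l s_mulmx //; exact: orthogonal_trmx.
Qed.

Definition align_cost n (A : 'I_n -> M) (P : 'I_n -> 'I_n -> M) : R :=
  2^-1 * \sum_i \sum_j s (A i) (A j) (P i j).

Notation G := (galign_dist s).

Lemma align_cost_ge0 n (A : 'I_n -> M) P : 0 <= align_cost A P.
Proof.
rewrite mulr_ge0 ?invr_ge0 //.
by apply: sumr_ge0 => i _; apply: sumr_ge0.
Qed.

Lemma galign_le n (A : 'I_n -> M) P : align_family P -> G A <= align_cost A P.
Proof. by move=> hP; apply: inf_image_le => // *; exact: align_cost_ge0. Qed.

Lemma le_galign n (A : 'I_n -> M) c :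
  (forall P, align_family P -> c <= align_cost A P) -> c <= G A.
Proof. exact: le_inf_image (align_family1 R m n). Qed.

Lemma galign_ge0 n (A : 'I_n -> M) : 0 <= G A.
Proof. by apply: le_galign => *; exact: align_cost_ge0. Qed.

Lemma galign_const n A0 : G (fun _ : 'I_n => A0) = 0.
Proof.
apply/le_anti; rewrite galign_ge0 andbT (le_trans (galign_le _ (align_family1 R m n))) //.
by rewrite /align_cost big1 ?mulr0 // => i _; rewrite big1.
Qed.

Lemma align_cost_perm n (A : 'I_n -> M) P (p : {perm 'I_n}) :
  align_cost (fun i => A (p i)) (fun i j => P (p i) (p j)) = align_cost A P.
Proof.
rewrite /align_cost [in RHS](reindex_inj (@perm_inj _ p)); congr (_ * _).
by apply: eq_bigr => i _; rewrite [in RHS](reindex_inj (@perm_inj _ p)).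
Qed.

Lemma galign_perm_le n (A : 'I_n -> M) (p : {perm 'I_n}) : G (fun i => A (p i)) <= G A.
Proof.
apply: le_galign => P hP; rewrite -(align_cost_perm _ _ p).
exact/galign_le/align_family_perm.
Qed.

Lemma galign_perm n (A : 'I_n -> M) (p : {perm 'I_n}) : G A = G (fun i => A (p i)).
Proof.
apply/le_anti; rewrite galign_perm_le andbT.
rewrite {1}(_ : A = fun i => A (p ((p^-1)%g i))); last by apply/funext => i; rewrite permKV.
exact: (galign_perm_le (fun i => A (p i))).
Qed.

Lemma sum_cost_conj_le n (A A' T : 'I_n -> M) P :
  align_family P -> (forall i, orthogonal (T i)) ->
  \sum_i \sum_j s (A i) (A j) (T i *m P i j *m (T j)^T) <=
  \sum_i \sum_j s (A' i) (A' j) (P i j) + (\sum_i s (A i) (A' i) (T i)) *+ n.-1 *+ 2.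
Proof.
move=> [oP _ P1] oT; set e := fun i => s (A i) (A' i) (T i).
have diag i : s (A i) (A i) (T i *m P i i *m (T i)^T) = 0.
  by rewrite P1 mulmx1 orthogonal_mulmxT.
(* The diagonal terms vanish, so only off-diagonal pairs pay [e i + e j]. *)
rewrite -[n in _ *+ n.-1](card_ord n) -sum_offdiag_add -big_split /=.
apply: ler_sum => i _; rewrite (bigD1 i) //= diag add0r.
apply: (@le_trans _ _ (\sum_(j | j != i) (s (A' i) (A' j) (P i j) + (e i + e j)))).
  apply: ler_sum => j _; rewrite /e.
  have := @cost_conj (A i) (A' i) (A j) (A' j) _ _ _ (oP i j) (oT i) (oT j).
  lra.
rewrite big_split /= lerD2r.
exact: (ler_sum_neq (fun j => s_ge0 (A' i) (A' j) (P i j))).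
Qed.

Lemma galign_le_conj n (A A' T : 'I_n -> M) : (forall i, orthogonal (T i)) ->
  G A <= G A' + (\sum_i s (A i) (A' i) (T i)) *+ n.-1.
Proof.
move=> oT; rewrite -lerBlDr; apply: le_galign => P hP; rewrite lerBlDr.
apply: (le_trans (galign_le A (align_family_conj hP oT))).
by have := sum_cost_conj_le A A' hP oT; rewrite /align_cost mulr2n; lra.
Qed.

Lemma galign_le_replace_dist n (A : 'I_n -> M) Z i :
  G A <= G (fun k => if k == i then Z else A k) + induced_dist (A i) Z *+ n.-1.
Proof.
rewrite -lerBlDl; apply: (le_inf_image_mulrn (orthogonal1 R m)) => Q oQ.
rewrite lerBlDl; set T := fun k => if k == i then Q else 1%:M.
have oT k : orthogonal (T k) by rewrite /T; case: eqP => _ //; exact: orthogonal1.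
apply: (le_trans (galign_le_conj A (fun k => if k == i then Z else A k) oT)).
rewrite (bigD1 i) //= /T eqxx big1 ?addr0 // => k /negPf ->.
exact: s_id.
Qed.

Lemma induced_dist_le_galign n (A : 'I_n -> M) i j :
  i != j -> induced_dist (A i) (A j) <= G A.
Proof.
move=> ij; apply: le_galign => P hP; have [oP _ _] := hP.
apply: (le_trans (induced_dist_le _ _ (oP i j))).
have row_le k l : s (A k) (A l) (P k l) <= \sum_l' s (A k) (A l') (P k l').
  exact: (ler_sum_term (fun l' => s_ge0 (A k) (A l') (P k l'))).
have Pji : s (A j) (A i) (P j i) = s (A i) (A j) (P i j).
  by rewrite (align_family_trmx i j hP) s_trmx.
have := ler_add_sum2 (x := fun k => \sum_l s (A k) (A l) (P k l))
                     (fun k => sumr_ge0 _ (fun l _ => s_ge0 _ _ _)) ij.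
by have := row_le i j; have := row_le j i; rewrite Pji /align_cost; lra.
Qed.

Lemma galign_le_sum_replace n (A : 'I_n -> M) Z :
  G A <= \sum_i G (fun k => if k == i then Z else A k).
Proof.
case: n A => [|n] A.
  rewrite big_ord0 (le_trans (galign_le A (align_family1 R m 0))) //.
  by rewrite /align_cost big_ord0 mulr0.
rewrite (bigD1 ord0) //=; apply: (le_trans (galign_le_replace_dist A Z ord0)).
rewrite lerD2l; have := sumr_neq_const (ord0 : 'I_n.+1) (induced_dist (A ord0) Z).
rewrite card_ord => <-; apply: ler_sum => k k0.
have k0F : (ord0 == k) = false by rewrite eq_sym (negPf k0).
have := @induced_dist_le_galign _ (fun l => if l == k then Z else A l) ord0 k.
by rewrite eqxx k0F; apply.
Qed.

Lemma galign_pseudo_n_metric n : pseudo_n_metric (galign_dist s (n:=n)).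
Proof.
split=> [A _|A0 _|A p _|A Z _ _].
- exact: galign_ge0.
- exact: galign_const.
- exact: galign_perm.
- exact: galign_le_sum_replace.
Qed.

End InvariantCost.

Section OrthInvariantNorm.
Variables (R : realType) (m : nat) (N : 'M[R]_m -> R).
Hypotheses (N_norm : matrix_norm N) (N_invariant : orth_invariant N).

Let normN A : N (- A) = N A.
Proof. by case: N_norm => _ _ NZ _; rewrite -scaleN1r NZ normrN1 mul1r. Qed.

Let norm0 : N 0 = 0.
Proof. by case: N_norm => _ _ NZ _; rewrite -(scale0r 0) NZ normr0 mul0r. Qed.

Let normD A B : N (A + B) <= N A + N B.
Proof. by case: N_norm. Qed.

Let norm_mull P A : orthogonal P -> N (P *m A) = N A.
Proof. by move=> oP; case: (N_invariant A oP). Qed.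

Let norm_mulr P A : orthogonal P -> N (A *m P) = N A.
Proof. by move=> oP; case: (N_invariant A oP). Qed.

Lemma s_fun_invariant_cost : invariant_cost (s_fun N).
Proof.
rewrite /s_fun; split=> [A B P|A|A B P oP|A B C P Q oP oQ].
- by case: N_norm.
- by rewrite mulmx1 mul1mx subrr norm0.
- rewrite -(norm_mull _ oP) -(norm_mulr _ oP) mulmxBr mulmxBl !mulmxA.
  rewrite -(mulmxA (P *m B)) orthogonal_mulTmx // orthogonal_mulmxT //.
  by rewrite mulmx1 mul1mx -normN opprB.
- have -> : A *m (P *m Q) - P *m Q *m C =
            (A *m P - P *m B) *m Q + P *m (B *m Q - Q *m C).
    by rewrite mulmxBl mulmxBr !mulmxA addrA subrK.
  apply: (le_trans (normD _ _)).
  by rewrite norm_mulr // norm_mull.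
Qed.

End OrthInvariantNorm.

Theorem theorem5 (R : realType) (m n : nat) (N : 'M[R]_m -> R) :
  matrix_norm N -> orth_invariant N ->
  pseudo_n_metric (fermat_dist (d_fun N) (n:=n)) /\
  pseudo_n_metric (galign_dist (s_fun N) (n:=n)).
Proof.
move=> N_norm N_invariant.
have s_cost := s_fun_invariant_cost N_norm N_invariant.
split; last exact: galign_pseudo_n_metric.
exact/fermat_pseudo_n_metric/induced_dist_pseudometric.
Qed.
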